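(* For all integers $1\le s\le t<n$, $$\tilde{R}(\dot C_t^{(b)}\sqcup \dot C_s^{(r)},Q_n)=n+t+1.$$
   Context: $C_t$ is the chain on $t$ vertices; $\dot C_t^{(b)}$ is it colored entirely blue and $\dot C_s^{(r)}$ is $C_s$ colored entirely red. The parallel composition $\dot P_1\sqcup\dot P_2$ is the colored poset consisting of disjoint copies of $\dot P_1$ and $\dot P_2$ with every vertex of one incomparable to every vertex of the other. $Q_N$ is the Boolean lattice of all subsets of an $N$-element set ordered by inclusion. In a blue/red coloring of $Q_N$, a copy of a colored poset $\dot P$ is an induced subposet isomorphic to $P$ with matching colors. The poset Erdős–Hajnal number $\tilde{R}(\dot P,Q_n)$ is the minimum $N$ such that every blue/red coloring of $Q_N$ contains a copy of $\dot P$ or a monochromatic induced copy of $Q_n$. *)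

From mathcomp Require Import all_boot.
Set Implicit Arguments. Unset Strict Implicit. Unset Printing Implicit Defensive.

(* Boolean lattice Q_N = {set 'I_N} ordered by inclusion (\subset).
   A blue/red coloring of Q_N is a map c : {set 'I_N} -> bool,
   with convention: true = blue, false = red. *)
Definition coloring (N : nat) := {set 'I_N} -> bool.

Definition has_copy (V : finType) (le : rel V) (col : V -> bool)
  (N : nat) (c : coloring N) : Prop :=
  exists f : V -> {set 'I_N},
    injective f /\ (forall x y, le x y = (f x \subset f y)) /\
    (forall x, c (f x) = col x).

Definition has_mono_Qn (n N : nat) (c : coloring N) : Prop :=
  exists f : {set 'I_n} -> {set 'I_N},
    injective f /\ (forall A B : {set 'I_n}, (A \subset B) = (f A \subset f B)) /\
    exists b : bool, forall A, c (f A) = b.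

Definition EH_property (V : finType) (le : rel V) (col : V -> bool)
  (n N : nat) : Prop :=
  forall c : coloring N, has_copy le col c \/ has_mono_Qn n c.

(* tilde R(P, Q_n) = m, i.e. m is the minimum N with the property. *)
Definition EH_number_is (V : finType) (le : rel V) (col : V -> bool)
  (n m : nat) : Prop :=
  EH_property le col n m /\ (forall N, N < m -> ~ EH_property le col n N).

(* The colored poset  C_t^(b) |_| C_s^(r) : vertices 'I_t + 'I_s,
   each summand a chain ordered as the naturals, the two components
   mutually incomparable; left chain blue, right chain red. *)
Definition chains_le (t s : nat) : rel ('I_t + 'I_s)%type :=
  fun x y =>
    match x, y with
    | inl i, inl j => (i <= j)%N
    | inr i, inr j => (i <= j)%N
    | _, _ => false
    end.

Definition chains_col (t s : nat) : ('I_t + 'I_s)%type -> bool :=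
  fun x => match x with inl _ => true | inr _ => false end.

From mathcomp Require Import all_boot zify boolp.
Set Implicit Arguments. Unset Strict Implicit. Unset Printing Implicit Defensive.

(** Upper bound.  Among the subsets of [{0, ..., n + t}] let [x = n + t - 1]
    and [y = n + t].  The sets [{x} ∪ Z ∪ {n, ..., n + j - 1}] with [Z ⊆ [n]]
    and [j < t] form a copy of [Q_n × C_t].  Unless some blue chain of length
    [t] consists of sets containing [x] but not [y], every [Z] has a least
    [j(Z)] such that no such chain of length [j(Z) + 1] lies below the set
    indexed by [(Z, j(Z))].  That set is red (otherwise it would extend the
    chain lying below [(Z, j(Z) - 1)]), and [j] is monotone in [Z], so these
    sets form a red copy of [Q_n].  Swapping [x], [y] and the colours gives a
    red chain of length [t >= s]; the two chains are incomparable since one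
    contains [x] and not [y], the other [y] and not [x].

    Lower bound.  For [N <= n + t], colour blue exactly the full set and the
    sets with fewer than [t] elements.  The top of a blue [t]-chain is not
    full, as some red set is not below it, so the chain starts at the empty
    set, which lies below every red set.  The images [B_i] of the prefixes
    [{0, ..., i - 1}] under a copy of [Q_n] satisfy [|B_i| >= |B_0| + i]: in a
    blue copy [B_t] is full yet strictly below [B_(t+1)]; in a red copy [B_0]
    has at least [t] elements, so [B_n] has at least [t + n >= N], hence is
    full and blue. *)

Lemma subset_iff_inj (V : Type) (T : finType) (le : rel V) (f : V -> {set T}) :
  antisymmetric le -> (forall x y, le x y = (f x \subset f y)) -> injective f.
Proof. by move=> le_anti f_le x y fxy; apply: le_anti; rewrite !f_le fxy subxx. Qed.

Lemma subset_anti (T : finType) : antisymmetric (fun A B : {set T} => A \subset B).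
Proof. by move=> A B; rewrite -eqEsubset => /eqP. Qed.

Lemma chains_le_anti t s : antisymmetric (@chains_le t s).
Proof. by case=> i [] j //= /anti_leq/val_inj ->. Qed.

Lemma card_proper_chain (T : finType) (g : nat -> {set T}) k :
  (forall i, i < k -> g i \proper g i.+1) -> #|g 0| + k <= #|g k|.
Proof.
elim: k => [|k IHk] g_proper; first by rewrite addn0.
have := proper_card (g_proper k (ltnSn k)).
have := IHk (fun i lt_ik => g_proper i (ltnW lt_ik)).
lia.
Qed.

Definition is_chain (T : finType) k (g : nat -> {set T}) :=
  forall i j, i < k -> j < k -> (i <= j) = (g i \subset g j).

Lemma is_chain_prefix (T : finType) k k' (g : nat -> {set T}) :
  k' <= k -> is_chain k g -> is_chain k' g.
Proof. by move=> le_k g_chain i j lt_i lt_j; apply: g_chain; lia. Qed.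

Lemma is_chain_rcons (T : finType) k (g : nat -> {set T}) (top : {set T}) :
  is_chain k g -> (forall i, i < k -> g i \proper top) ->
  is_chain k.+1 (fun i => if i < k then g i else top).
Proof.
move=> g_chain g_top i j; rewrite !ltnS => le_i le_j.
case: ltnP => [lt_i|ge_i]; case: ltnP => [lt_j|ge_j].
- exact: g_chain.
- by rewrite (proper_sub (g_top i lt_i)); lia.
- by move: (g_top j lt_j); rewrite properE => /andP[_ /negbTE ->]; lia.
- by rewrite subxx; lia.
Qed.

Definition has_chain_below (T : finType) (good : pred {set T}) k (S : {set T}) :=
  exists g, is_chain k g /\ forall i, i < k -> good (g i) /\ g i \subset S.

Section ChainOrCube.

Variables (N n m : nat) (good : pred {set 'I_N}).
Variable phi : {set 'I_n} -> nat -> {set 'I_N}.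
Implicit Types Z : {set 'I_n}.
Hypothesis phi_mono : forall Z Z' j j',
  Z \subset Z' -> j <= j' -> j' <= m -> phi Z j \subset phi Z' j'.
Hypothesis phi_proper : forall Z j, j < m -> phi Z j \proper phi Z j.+1.
Hypothesis phi_reflect : forall Z Z' j j', phi Z j \subset phi Z' j' -> Z \subset Z'.
Hypothesis no_long_chain : forall Z, ~ has_chain_below good m.+1 (phi Z m).

Let gap_exists Z : exists j, ~~ `[< has_chain_below good j.+1 (phi Z j) >].
Proof. by exists m; apply/asboolPn/no_long_chain. Qed.

Let gap Z := ex_minn (gap_exists Z).

Let gap_no_chain Z : ~ has_chain_below good (gap Z).+1 (phi Z (gap Z)).
Proof. by rewrite /gap; case: ex_minnP => j /asboolPn. Qed.

Let chain_below_gap Z j : j < gap Z -> has_chain_below good j.+1 (phi Z j).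
Proof.
rewrite /gap; case: ex_minnP => j0 _ j0_min lt_j.
by apply/asboolP/negPn/negP => /j0_min; rewrite leqNgt lt_j.
Qed.

Let gap_le Z : gap Z <= m.
Proof. by rewrite /gap; case: ex_minnP => j _; apply; apply/asboolPn/no_long_chain. Qed.

Let gap_mono Z Z' : Z \subset Z' -> gap Z <= gap Z'.
Proof.
move=> sZ; rewrite leqNgt; apply/negP => /chain_below_gap [g [g_chain g_good]].
apply: (@gap_no_chain Z'); exists g; split=> // i lt_i.
have [good_i sub_i] := g_good i lt_i; split=> //.
exact: subset_trans sub_i (phi_mono sZ (leqnn _) (gap_le Z')).
Qed.

Let gap_not_good Z : ~~ good (phi Z (gap Z)).
Proof.
apply/negP => good_top; apply: (@gap_no_chain Z).
have [g [g_chain g_below]] : exists g, is_chain (gap Z) g /\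
    forall i, i < gap Z -> good (g i) /\ g i \proper phi Z (gap Z).
  have := gap_le Z; case: (gap Z) (@chain_below_gap Z) => [|j] below le_m.
    by exists (fun=> set0).
  have [g [g_chain g_below]] := below j (ltnSn j); exists g; split=> // i lt_i.
  have [good_i sub_i] := g_below i lt_i; split=> //.
  exact: sub_proper_trans sub_i (phi_proper Z le_m).
exists (fun i => if i < gap Z then g i else phi Z (gap Z)); split.
  by apply: is_chain_rcons => // i /g_below[].
move=> i _; case: ifP => [lt_i|_]; last by rewrite subxx.
by have [good_i /proper_sub] := g_below i lt_i.
Qed.

Lemma cube_at_gap : exists F : {set 'I_n} -> {set 'I_N},
  (forall A B : {set 'I_n}, (A \subset B) = (F A \subset F B)) /\
  forall Z, ~~ good (F Z) /\ exists2 j, j <= m & F Z = phi Z j.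
Proof.
exists (fun Z => phi Z (gap Z)); split.
  move=> A B; apply/idP/idP => [sAB|/phi_reflect //].
  exact: phi_mono sAB (gap_mono sAB) (gap_le B).
by move=> Z; split; [exact: gap_not_good | exists (gap Z); first exact: gap_le].
Qed.

End ChainOrCube.

Lemma chain_or_cube N n m (good : pred {set 'I_N})
    (phi : {set 'I_n} -> nat -> {set 'I_N}) :
  (forall (Z Z' : {set 'I_n}) j j',
     Z \subset Z' -> j <= j' -> j' <= m -> phi Z j \subset phi Z' j') ->
  (forall (Z : {set 'I_n}) j, j < m -> phi Z j \proper phi Z j.+1) ->
  (forall (Z Z' : {set 'I_n}) j j', phi Z j \subset phi Z' j' -> Z \subset Z') ->
  (exists g, is_chain m.+1 g /\ forall i, i < m.+1 -> good (g i)) \/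
  exists F : {set 'I_n} -> {set 'I_N},
    (forall A B : {set 'I_n}, (A \subset B) = (F A \subset F B)) /\
    forall Z, ~~ good (F Z) /\ exists2 j, j <= m & F Z = phi Z j.
Proof.
move=> phi_mono phi_proper phi_reflect.
have [[Z [g [g_chain g_good]]]|no_chain] :=
  pselect (exists Z, has_chain_below good m.+1 (phi Z m)).
  by left; exists g; split=> // i /g_good[].
by right; apply: cube_at_gap => // Z chain_Z; apply: no_chain; exists Z.
Qed.

Section CubeChain.

Variables (N n : nat) (n_le_N : n <= N) (a : 'I_N).
Implicit Types Z : {set 'I_n}.

Definition cube_chain Z j : {set 'I_N} :=
  a |: [set widen_ord n_le_N z | z in Z] :|: [set i : 'I_N | n <= i < n + j].

Lemma cube_chain_high Z j (i : 'I_N) :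
  n <= i -> (i \in cube_chain Z j) = (i == a :> nat) || (i < n + j).
Proof.
move=> n_le_i; rewrite !inE n_le_i; case: imsetP => [[z _ i_z]|_]; last by rewrite orbF.
by move/(congr1 val): i_z => /= i_z; exfalso; have := ltn_ord z; lia.
Qed.

Lemma cube_chain_mono Z Z' j j' :
  Z \subset Z' -> j <= j' -> cube_chain Z j \subset cube_chain Z' j'.
Proof.
move=> sZ le_j; apply: setUSS; first exact/setUS/imsetS.
apply/subsetP => i; rewrite !inE => /andP[-> lt_i].
exact: leq_trans lt_i (leq_add (leqnn n) le_j).
Qed.

Lemma cube_chain_proper Z j : n + j < a -> cube_chain Z j \proper cube_chain Z j.+1.
Proof.
move=> lt_a; rewrite properE cube_chain_mono //=.
have lt_N : n + j < N by have := ltn_ord a; lia.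
apply/subsetPn; exists (Ordinal lt_N); rewrite !cube_chain_high /=; lia.
Qed.

Lemma cube_chain_notin Z j (b : 'I_N) :
  b != a -> n + j <= b -> b \notin cube_chain Z j.
Proof. by rewrite -val_eqE /= => b_a le_b; rewrite cube_chain_high; lia. Qed.

Hypothesis n_le_a : n <= a.

Lemma mem_cube_chain Z j : a \in cube_chain Z j.
Proof. by rewrite cube_chain_high ?eqxx. Qed.

Lemma cube_chain_low Z j (z : 'I_n) :
  (widen_ord n_le_N z \in cube_chain Z j) = (z \in Z).
Proof.
have widen_inj : injective (widen_ord n_le_N) by move=> ? ? /(congr1 val) /= /val_inj.
have lt_z := ltn_ord z.
have z_a : (widen_ord n_le_N z == a) = false by rewrite -val_eqE /=; lia.
have n_z : (n <= z) = false by lia.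
by rewrite !inE mem_imset // z_a n_z orbF.
Qed.

Lemma cube_chain_reflect Z Z' j j' :
  cube_chain Z j \subset cube_chain Z' j' -> Z \subset Z'.
Proof.
move=> /subsetP sub; apply/subsetP => z.
by rewrite -(cube_chain_low Z j) -(cube_chain_low Z' j'); apply: sub.
Qed.

End CubeChain.

Lemma chain_or_mono_Qn N n m (c : coloring N) (b : bool) (x y : 'I_N) :
  n + m <= x -> n + m <= y -> x != y ->
  (exists g, is_chain m.+1 g /\
     forall i, i < m.+1 -> [/\ c (g i) = b, x \in g i & y \notin g i]) \/
  has_mono_Qn n c.
Proof.
move=> x_large y_large x_y.
have n_le_N : n <= N by have := ltn_ord x; lia.
have n_le_x : n <= x by lia.
have phi_proper Z j : j < m -> cube_chain n_le_N x Z j \proper cube_chain n_le_N x Z j.+1.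
  by move=> lt_j; apply: cube_chain_proper; lia.
pose good T := [&& c T == b, x \in T & y \notin T].
have [[g [g_chain g_good]]|[F [F_sub F_bad]]] := chain_or_cube good
  (fun Z Z' j j' sZ le_j _ => cube_chain_mono n_le_N x sZ le_j) phi_proper
  (cube_chain_reflect n_le_x).
  by left; exists g; split=> // i /g_good /and3P[/eqP].
right; exists F; split; first exact: subset_iff_inj (@subset_anti _) F_sub.
split=> //; exists (~~ b) => Z; have [F_Z_bad [j le_j F_Z]] := F_bad Z.
have y_x : y != x by rewrite eq_sym.
move: F_Z_bad; rewrite /good F_Z mem_cube_chain // cube_chain_notin //; last by lia.
by rewrite !andbT negb_eqb => /addbP <-; rewrite negbK.
Qed.

Lemma has_copy_of_chains N t s (c : coloring N) (g1 g2 : nat -> {set 'I_N})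
    (x y : 'I_N) :
  is_chain t g1 -> is_chain s g2 ->
  (forall i, i < t -> [/\ c (g1 i) = true, x \in g1 i & y \notin g1 i]) ->
  (forall j, j < s -> [/\ c (g2 j) = false, y \in g2 j & x \notin g2 j]) ->
  has_copy (@chains_le t s) (@chains_col t s) c.
Proof.
move=> g1_chain g2_chain g1_sep g2_sep.
pose f (u : 'I_t + 'I_s) := match u with inl i => g1 i | inr j => g2 j end.
have f_le u v : chains_le u v = (f u \subset f v).
  case: u v => [i|j] [i'|j'] /=; [exact: g1_chain | | | exact: g2_chain].
  - have [_ x_in _] := g1_sep i (ltn_ord i); have [_ _ x_out] := g2_sep j' (ltn_ord j').
    by apply/esym/negP => /subsetP/(_ x x_in); rewrite (negbTE x_out).
  - have [_ y_in _] := g2_sep j (ltn_ord j); have [_ _ y_out] := g1_sep i' (ltn_ord i').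
    by apply/esym/negP => /subsetP/(_ y y_in); rewrite (negbTE y_out).
exists f; split; first exact: subset_iff_inj (@chains_le_anti t s) f_le.
split=> // -[i|j] /=; first by have [] := g1_sep i (ltn_ord i).
by have [] := g2_sep j (ltn_ord j).
Qed.

Lemma EH_property_upper n s t :
  0 < t -> s <= t -> EH_property (@chains_le t s) (@chains_col t s) n (n + t + 1).
Proof.
case: t => [//|m] _ s_le c.
have x_lt : n + m < n + m.+1 + 1 by lia.
have y_lt : n + m.+1 < n + m.+1 + 1 by lia.
pose x := Ordinal x_lt; pose y := Ordinal y_lt.
have x_y : x != y by rewrite -val_eqE /=; lia.
have y_x : y != x by rewrite eq_sym.
have x_large : n + m <= x by [].
have y_large : n + m <= y by rewrite /= addnS.
have [[g1 [g1_chain g1_sep]]|] := chain_or_mono_Qn c true x_large y_large x_y;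
  last by right.
have [[g2 [g2_chain g2_sep]]|] := chain_or_mono_Qn c false y_large x_large y_x;
  last by right.
left; apply: has_copy_of_chains g1_chain (is_chain_prefix s_le g2_chain) g1_sep _.
by move=> j lt_j; apply: g2_sep; lia.
Qed.

Definition small_or_full N t : coloring N := fun X => (#|X| < t) || (X == setT).

Lemma small_or_full_no_copy N s t :
  0 < s -> 0 < t -> ~ has_copy (@chains_le t s) (@chains_col t s) (@small_or_full N t).
Proof.
case: t => [//|m] s_pos _ [f [_ [f_le f_col]]].
pose red : 'I_m.+1 + 'I_s := inr (Ordinal s_pos).
pose blue i : 'I_m.+1 + 'I_s := inl (inord i).
have g_proper i : i < m -> f (blue i) \proper f (blue i.+1).
  by move=> lt_i; rewrite properE -!f_le /= !inordK //; lia.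
have top_small : #|f (blue m)| < m.+1.
  have := f_col (blue m); rewrite /small_or_full => /orP[//|/eqP top_full].
  by have := f_le red (blue m); rewrite top_full subsetT.
have bottom_empty : f (blue 0) = set0.
  by apply/cards0_eq; have := card_proper_chain g_proper; lia.
by have := f_le (blue 0) red; rewrite bottom_empty sub0set.
Qed.

Lemma small_or_full_no_mono_Qn N n t :
  t < n -> N <= n + t -> ~ has_mono_Qn n (@small_or_full N t).
Proof.
move=> lt_t le_N [f [_ [f_sub [b f_col]]]].
pose B i := f [set j : 'I_n | j < i].
have B_proper i : i < n -> B i \proper B i.+1.
  move=> lt_i; rewrite properE -!f_sub; apply/andP; split.
    by apply/subsetP => j; rewrite !inE; apply: ltnW.
  by apply/subsetPn; exists (Ordinal lt_i); rewrite !inE /= ?ltnn ?ltnSn.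
have B_card i : i <= n -> #|B 0| + i <= #|B i|.
  by move=> le_i; apply: card_proper_chain => j lt_j; apply: B_proper; lia.
case: b f_col => f_col.
- have B_t_full : B t = setT.
    have := f_col [set j : 'I_n | j < t]; rewrite /small_or_full -/(B t).
    by move: (B_card t (ltnW lt_t)) => card_B_t /orP[|/eqP //]; lia.
  by have := B_proper t lt_t; rewrite B_t_full properE subsetT andbF.
- have B_0_large : t <= #|B 0|.
    have := f_col [set j : 'I_n | j < 0]; rewrite /small_or_full -/(B 0).
    by case/norP; rewrite -leqNgt.
  have B_n_full : B n = setT.
    apply/eqP; rewrite eqEcard subsetT cardsT card_ord.
    by have := B_card n (leqnn n); lia.
  have := f_col [set j : 'I_n | j < n].
  by rewrite /small_or_full -/(B n) B_n_full eqxx orbT.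
Qed.

Lemma EH_property_lower n s t N :
  0 < s -> 0 < t -> t < n -> N <= n + t ->
  ~ EH_property (@chains_le t s) (@chains_col t s) n N.
Proof.
move=> s_pos t_pos lt_t le_N EH.
have [|] := EH (@small_or_full N t).
  exact: small_or_full_no_copy.
exact: small_or_full_no_mono_Qn.
Qed.

Theorem lemma11 (n s t : nat) :
  1 <= s -> s <= t -> t < n ->
  EH_number_is (@chains_le t s) (@chains_col t s) n (n + t + 1).
Proof.
move=> s_pos s_le lt_t; have t_pos : 0 < t by lia.
split; first exact: EH_property_upper.
by move=> N lt_N; apply: EH_property_lower => //; lia.
Qed.
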